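(* Let $r\ge1$, let $G=(V,A)$ be a weakly connected directed graph with distinct nodes $s,t$. Then the function $\mathbb{R}_{\ge0}^A\to\mathbb{R}\cup\{\infty\}$, $y\mapsto R^y_{s,t}$, is convex.
   Context: Fix $r\ge1$. For $y\in\mathbb{R}_{\ge 0}^A$ let $\operatorname{supp}(y)=\{a\in A: y_a>0\}$, let $G'=(V,\operatorname{supp}(y))$ with node-arc incidence matrix $\Gamma'$ (entry $+1$ if the arc leaves the node, $-1$ if it enters, $0$ otherwise). Define $R^y_{s,t}=\min\{\sum_{a\in\operatorname{supp}(y)} |f_a|^{r+1}/y_a^{r} : f\in\mathbb{R}^{\operatorname{supp}(y)},\ \Gamma' f=\mathbf{1}_s-\mathbf{1}_t\}$, with $R^y_{s,t}=\infty$ if $s$ and $t$ are not connected in $G'$. *)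

From HB Require Import structures.
From mathcomp Require Import all_boot all_order all_algebra.
From mathcomp Require Import all_classical all_reals all_analysis.
Set Implicit Arguments. Unset Strict Implicit. Unset Printing Implicit Defensive.
Import Order.TTheory GRing.Theory Num.Theory.
Local Open Scope classical_set_scope.
Local Open Scope ring_scope.

Definition weakly_connected (V A : finType) (src tgt : A -> V) : Prop :=
  forall u v : V,
    connect (fun x y => [exists a : A,
      ((src a == x) && (tgt a == y)) || ((src a == y) && (tgt a == x))]) u v.

Definition supp (R : realType) (A : finType) (y : A -> R) : pred A :=
  fun a => 0 < y a.

(* s and t connected in G' = (V, supp y) (undirected sense, as in the paper's
   "not connected in G'"). *)
Definition connected_in_supp (R : realType) (V A : finType) (src tgt : A -> V)
    (y : A -> R) (s t : V) : bool :=
  connect (fun x z => [exists a : A, (a \in supp y) &&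
      (((src a == x) && (tgt a == z)) || ((src a == z) && (tgt a == x)))]) s t.

Definition incid (R : realType) (V A : finType) (src tgt : A -> V) (v : V) (a : A) : R :=
  (src a == v)%:R - (tgt a == v)%:R.

(* f in R^{supp y} (encoded as f : A -> R vanishing off supp y) with Γ' f = 1_s - 1_t *)
Definition st_flow (R : realType) (V A : finType) (src tgt : A -> V)
    (y : A -> R) (s t : V) (f : A -> R) : Prop :=
  (forall a, a \notin supp y -> f a = 0) /\
  (forall v : V, \sum_(a | a \in supp y) incid R src tgt v a * f a
                 = (v == s)%:R - (v == t)%:R).

Definition flow_cost (R : realType) (A : finType) (r : R) (y f : A -> R) : R :=
  \sum_(a | a \in supp y) (`|f a| `^ (r + 1) / (y a) `^ r).

(* R^y_{s,t}: +oo if s,t not connected in G', otherwise the minimum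
   (taken as the infimum, which is attained) of the flow cost. *)
Definition Rst (R : realType) (V A : finType) (src tgt : A -> V) (r : R)
    (s t : V) (y : A -> R) : \bar R :=
  if connected_in_supp src tgt y s t then
    ereal_inf [set (flow_cost r y f)%:E | f in [set f | st_flow src tgt y s t f]]
  else +oo%E.

(* Each arc contributes the perspective [y * (|f| / y)^(r+1)] of the convex
   power function, which is jointly convex in (y, f).  A convex combination of
   an s-t flow for y1 and one for y2 is an s-t flow for the combined capacity,
   so its cost bounds R^y from above by the convex combination of the costs;
   taking near-optimal flows for y1 and y2 gives convexity of y |-> R^y. *)
From HB Require Import structures.
From mathcomp Require Import all_boot all_order all_algebra.
From mathcomp Require Import all_classical all_reals all_analysis.
From mathcomp Require Import ring.
Set Implicit Arguments. Unset Strict Implicit. Unset Printing Implicit Defensive.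
Import Order.TTheory GRing.Theory Num.Theory.
Local Open Scope ring_scope.

Section Perspective.
Variable R : realType.
Implicit Types p r y u v lam : R.

Definition persp p y u : R := y * (u / y) `^ p.

Lemma mulr_divK_cond y u : (y = 0 -> u = 0) -> y * (u / y) = u.
Proof.
have [->|y0] := eqVneq y 0; first by move=> /(_ erefl) ->; rewrite mul0r.
by rewrite mulrC divfK.
Qed.

Lemma persp_ge0 p y u : 0 <= y -> 0 <= persp p y u.
Proof. by move=> y0; rewrite mulr_ge0 ?powR_ge0. Qed.

Lemma persp_le p y u v : 0 <= p -> 0 <= y -> 0 <= u <= v -> persp p y u <= persp p y v.
Proof.
move=> p0 y0 /andP[u0 uv]; rewrite ler_wpM2l // ge0_ler_powR ?nnegrE ?divr_ge0 ?(le_trans u0 uv) //.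
by rewrite ler_wpM2r ?invr_ge0.
Qed.

Lemma persp_powR r y u : 0 <= r -> 0 < y -> 0 <= u ->
  persp (r + 1) y u = u `^ (r + 1) / y `^ r.
Proof.
move=> r0 y0 u0; have yr_neq0 : y `^ r != 0 by rewrite gt_eqF ?powR_gt0.
apply: (mulIf yr_neq0); rewrite divfK // /persp mulrAC.
rewrite -{1}(powRr1 (ltW y0)) -powRD ?gt_eqF ?ltr_wpDr // (addrC 1 r).
by rewrite -powRM ?divr_ge0 ?(ltW y0) // mulrC divfK ?gt_eqF.
Qed.

Lemma powR_conv p lam u v : 1 <= p -> 0 <= lam <= 1 -> 0 <= u -> 0 <= v ->
  (lam * u + (1 - lam) * v) `^ p <= lam * u `^ p + (1 - lam) * v `^ p.
Proof.
move=> p1 /andP[l0 l1] u0 v0.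
have := @convex_powR R p p1 (Itv01 l0 l1) u v.
by rewrite !inE /= !in_itv /= !andbT; apply.
Qed.

(* With [w := lam y1 / y], the ratio [u / y] of the combination is the
   [w]-combination of the ratios [u_i / y_i], to which convexity of [powR]
   applies. *)
Lemma persp_convex p lam y1 y2 u1 u2 : 1 <= p -> 0 <= lam <= 1 ->
  0 <= y1 -> 0 <= y2 -> 0 <= u1 -> 0 <= u2 ->
  (y1 = 0 -> u1 = 0) -> (y2 = 0 -> u2 = 0) ->
  persp p (lam * y1 + (1 - lam) * y2) (lam * u1 + (1 - lam) * u2)
  <= lam * persp p y1 u1 + (1 - lam) * persp p y2 u2.
Proof.
move=> p1 /andP[lam_ge0 lam_le1] y1_ge0 y2_ge0 u1_ge0 u2_ge0 hu1 hu2.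
have lamc_ge0 : 0 <= 1 - lam by rewrite subr_ge0.
set y := lam * y1 + (1 - lam) * y2.
have [y0|y_neq0] := eqVneq y 0.
  by rewrite /persp y0 mul0r addr_ge0 // mulr_ge0 // persp_ge0.
have y_ge0 : 0 <= y by rewrite addr_ge0 ?mulr_ge0.
set w := lam * y1 / y.
have w_ge0 : 0 <= w by rewrite divr_ge0 ?mulr_ge0.
have wc : 1 - w = (1 - lam) * y2 / y.
  by apply: (mulIf y_neq0); rewrite mulrBl !divfK // mul1r /y addrC addKr.
have w_le1 : w <= 1 by rewrite -subr_ge0 wc divr_ge0 ?mulr_ge0.
have ratio : (lam * u1 + (1 - lam) * u2) / y = w * (u1 / y1) + (1 - w) * (u2 / y2).
  by rewrite wc /w -{1}(mulr_divK_cond hu1) -{1}(mulr_divK_cond hu2); ring.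
rewrite /persp ratio.
apply: le_trans (ler_wpM2l y_ge0 (powR_conv _ _ _ _)) _;
  rewrite ?w_le1 ?divr_ge0 ?mulr_ge0 //.
by rewrite wc /w le_eqVlt; apply/orP; left; apply/eqP; field.
Qed.

End Perspective.

Lemma lee_conv_from_above (R : realType) (lam : R) (z x1 x2 : \bar R) :
  0 < lam < 1 -> (0 <= x1)%E -> (0 <= x2)%E ->
  (forall c1 c2 : R, (x1 < c1%:E)%E -> (x2 < c2%:E)%E ->
     (z <= (lam * c1 + (1 - lam) * c2)%:E)%E) ->
  (z <= lam%:E * x1 + (1 - lam)%:E * x2)%E.
Proof.
move=> /andP[l0 l1] x10 x20 above.
have l1' : 0 < 1 - lam by rewrite subr_gt0.
have pinfty (c : R) (x : \bar R) : 0 < c -> (0 <= x)%E -> (c%:E * +oo + x = +oo)%E.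
  move=> c0 x0; rewrite mulry gtr0_sg // mul1e addye //.
  by apply: contraTN x0 => /eqP ->.
have [->|x1fin] := eqVneq x1 +oo%E.
  by rewrite pinfty ?leey // mule_ge0 // lee_fin ltW.
have [->|x2fin] := eqVneq x2 +oo%E.
  by rewrite addeC pinfty ?leey // mule_ge0 // lee_fin ltW.
case: x1 above x10 x1fin => [c1| |] // above _ _.
case: x2 above x20 x2fin => [c2| |] // above _ _.
apply/lee_addgt0Pr => e e0.
have -> : (lam%:E * c1%:E + (1 - lam)%:E * c2%:E + e%:E
    = (lam * (c1 + e) + (1 - lam) * (c2 + e))%:E)%E.
  by rewrite -!EFinM -!EFinD; congr EFin; ring.
by apply: above; rewrite lte_fin ltrDl.
Qed.

Section Flows.
Variables (R : realType) (V A : finType) (src tgt : A -> V) (s t : V).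
Implicit Types (y f : A -> R) (r : R).

Lemma flow_cost_persp r y f : 0 <= r -> (forall a, 0 <= y a) ->
  flow_cost r y f = \sum_a persp (r + 1) (y a) `|f a|.
Proof.
move=> r0 y0; rewrite /flow_cost big_mkcond /=; apply: eq_bigr => a _.
rewrite unfold_in /supp; case: ltgtP (y0 a) => // [ya|<-] _.
  by rewrite persp_powR.
by rewrite /persp mul0r.
Qed.

Lemma Rst_ge0 r y : (0 <= Rst src tgt r s t y)%E.
Proof.
rewrite /Rst; case: ifP => _ //; apply: le_ereal_inf_tmp => _ [f _ <-].
by rewrite lee_fin sumr_ge0 // => a _; rewrite divr_ge0 ?powR_ge0.
Qed.

Lemma Rst_le_flow_cost r y f : connected_in_supp src tgt y s t ->
  st_flow src tgt y s t f -> (Rst src tgt r s t y <= (flow_cost r y f)%:E)%E.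
Proof. by rewrite /Rst => -> hf; apply: ereal_inf_lbound; exists f. Qed.

Lemma Rst_lt_flow_cost r y (c : R) : (Rst src tgt r s t y < c%:E)%E ->
  connected_in_supp src tgt y s t /\
  exists2 f, st_flow src tgt y s t f & flow_cost r y f < c.
Proof.
rewrite /Rst; case: ifP => // conn /ereal_inf_lt[_ [f hf <-]].
by rewrite lte_fin; split; last exists f.
Qed.

Lemma sum_supp y f (g : A -> R) : (forall a, a \notin supp y -> f a = 0) ->
  \sum_(a | a \in supp y) g a * f a = \sum_a g a * f a.
Proof.
move=> hf; rewrite big_mkcond /=; apply: eq_bigr => a _.
by case: ifPn => // /hf ->; rewrite mulr0.
Qed.

Variables (lam : R) (y1 y2 : A -> R).
Hypotheses (lam_gt0 : 0 < lam) (lam_lt1 : lam < 1).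
Hypotheses (y1_ge0 : forall a, 0 <= y1 a) (y2_ge0 : forall a, 0 <= y2 a).

Local Notation mix g1 g2 := (fun a => lam * g1 a + (1 - lam) * g2 a).

Let lam_ge0 : 0 <= lam. Proof. exact: ltW. Qed.
Let lamc_gt0 : 0 < 1 - lam. Proof. by rewrite subr_gt0. Qed.
Let lamc_ge0 : 0 <= 1 - lam. Proof. exact: ltW. Qed.

Lemma supp_mix a : (a \in supp (mix y1 y2)) = (a \in supp y1) || (a \in supp y2).
Proof.
rewrite !unfold_in /supp !lt0r y1_ge0 y2_ge0 !andbT.
rewrite addr_ge0 ?mulr_ge0 // andbT.
by rewrite paddr_eq0 ?mulr_ge0 // !mulf_eq0 (gt_eqF lam_gt0) (gt_eqF lamc_gt0) negb_and.
Qed.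

Lemma connected_mix : connected_in_supp src tgt y1 s t ->
  connected_in_supp src tgt (mix y1 y2) s t.
Proof.
apply: connect_sub => x z /existsP[a /andP[ha hxz]].
by apply: connect1; apply/existsP; exists a; rewrite supp_mix ha.
Qed.

Lemma st_flow_mix f1 f2 : st_flow src tgt y1 s t f1 -> st_flow src tgt y2 s t f2 ->
  st_flow src tgt (mix y1 y2) s t (mix f1 f2).
Proof.
move=> [off1 bal1] [off2 bal2].
have off a : a \notin supp (mix y1 y2) -> mix f1 f2 a = 0.
  by rewrite supp_mix negb_or => /andP[/off1 -> /off2 ->]; rewrite !mulr0 addr0.
split=> // v; rewrite (sum_supp _ off).
under eq_bigr do rewrite mulrDr !(mulrCA (incid R src tgt v _)).
rewrite big_split /= -!mulr_sumr -(sum_supp _ off1) -(sum_supp _ off2) bal1 bal2.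
by rewrite -mulrDl subrKC mul1r.
Qed.

Lemma flow_cost_mix r f1 f2 : 1 <= r ->
  st_flow src tgt y1 s t f1 -> st_flow src tgt y2 s t f2 ->
  flow_cost r (mix y1 y2) (mix f1 f2)
  <= lam * flow_cost r y1 f1 + (1 - lam) * flow_cost r y2 f2.
Proof.
move=> r1 [off1 _] [off2 _].
have r0 : 0 <= r by apply: le_trans r1.
have ymix_ge0 a : 0 <= mix y1 y2 a by rewrite addr_ge0 ?mulr_ge0.
have vanish y f (off : forall a, a \notin supp y -> f a = 0) a :
    y a = 0 -> `|f a| = 0.
  by move=> ya; rewrite off ?normr0 // unfold_in /supp ya ltxx.
rewrite !flow_cost_persp // !mulr_sumr -big_split /=; apply: ler_sum => a _.
apply: (@le_trans _ _ (persp (r + 1) (mix y1 y2 a) (lam * `|f1 a| + (1 - lam) * `|f2 a|))).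
  apply: persp_le; rewrite ?addr_ge0 ?mulr_ge0 ?normr_ge0 //=.
  by rewrite (le_trans (ler_normD _ _)) // !normrM (ger0_norm lam_ge0) (ger0_norm lamc_ge0).
apply: persp_convex (vanish _ _ off1 a) (vanish _ _ off2 a);
  by rewrite ?lerDr ?lam_ge0 ?(ltW lam_lt1).
Qed.

End Flows.

Theorem lemma3 (R : realType) (V A : finType) (src tgt : A -> V) (r : R) (s t : V)
    (hr : 1 <= r) (hG : weakly_connected src tgt) (hst : s != t)
    (y1 y2 : A -> R) (hy1 : forall a, 0 <= y1 a) (hy2 : forall a, 0 <= y2 a)
    (lam : R) (hlam0 : 0 < lam) (hlam1 : lam < 1) :
  (Rst src tgt r s t (fun a => (lam * y1 a + (1 - lam) * y2 a)%R)
    <= lam%:E * Rst src tgt r s t y1 + (1 - lam)%:E * Rst src tgt r s t y2)%E.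
Proof.
apply: lee_conv_from_above; rewrite ?hlam0 ?hlam1 ?Rst_ge0 // => c1 c2.
move=> /Rst_lt_flow_cost[conn1 [f1 hf1 cost1]] /Rst_lt_flow_cost[_ [f2 hf2 cost2]].
have conn := connected_mix hlam0 hlam1 hy1 hy2 conn1.
have hf := st_flow_mix hlam0 hlam1 hy1 hy2 hf1 hf2.
apply: le_trans (Rst_le_flow_cost r conn hf) _.
rewrite lee_fin (le_trans (flow_cost_mix hlam0 hlam1 hy1 hy2 hr hf1 hf2)) //.
by rewrite lerD // ler_wpM2l ?subr_ge0 ?ltW.
Qed.
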